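(* Let $\Psi_n$ be a discrete-time Markov chain on a measurable space $(X,\mathcal{B})$, let $X=G\cup B$ be a partition into measurable sets, and let $\mathfrak{C}\in\mathcal{B}$ with $\mathfrak{C}\subset G$. Let $T_0=0$ and $T_{n+1}=\inf\{k>T_n:\Psi_k\in G\}$, let $\hat\Psi_n=\Psi_{T_n}$ (the $G$-induced chain), $\tau_{\mathfrak{C}}=\inf\{n>0:\Psi_n\in\mathfrak{C}\}$ and $\hat\tau_{\mathfrak{C}}=\inf\{n>0:\hat\Psi_n\in\mathfrak{C}\}$. Assume: (i) there is a constant $\alpha>0$ and a function $\xi:X\to[1,\infty)$ with $\sup_{x\in G}\xi(x)\le\xi_1<\infty$ such that for every $n$ and $k$, $\mathbb{P}[T_{n+1}-T_n>k\mid\Psi_{T_n}]\le\xi(\Psi_{T_n})k^{-\alpha}$; (ii) there are a constant $\omega>0$ and a function $\eta:X\to(0,\infty)$ such that $\mathbb{P}_{\Psi_0}[\hat\tau_{\mathfrak{C}}>k]\le\eta(\Psi_0)e^{-\omega k}$ for all $k$. Then for any $\epsilon>0$ there is a constant $c$ such that $$\mathbb{P}_{\Psi_0}[\tau_{\mathfrak{C}}>n]\le c\,(\eta(\Psi_0)+\xi(\Psi_0))\,n^{-(\alpha-\epsilon)}$$ for every $\Psi_0\in X$ and all $n\ge1$.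
   Context: $\mathbb{P}_{x}$ denotes probability for the chain started at $\Psi_0=x$. *)

From HB Require Import structures.
From mathcomp Require Import all_boot all_order all_algebra.
From mathcomp Require Import all_classical all_reals all_analysis.
Set Implicit Arguments. Unset Strict Implicit. Unset Printing Implicit Defensive.
Import Order.TTheory GRing.Theory Num.Theory.
Local Open Scope classical_set_scope.
Local Open Scope ring_scope.

(* First time strictly after t at which the (Prop) predicate P holds;
   None encodes inf of the empty set = +infinity. *)
Definition first_after (P : nat -> Prop) (t : nat) : option nat :=
  match pselect (exists k, (t < k)%N && `[< P k >]) with
  | left h => Some (ex_minn h)
  | right _ => None
  end.

Definition opt_gt (o : option nat) (n : nat) : Prop :=
  if o is Some t then (n < t)%N else True.

Section chain.
Context {d d' : measure_display} (X : measurableType d) (Om : measurableType d').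
Context (R : realType).

Definition cyl (Psi : nat -> Om -> X) (n : nat) (A : nat -> set X) : set Om :=
  [set w | forall i, (i <= n)%N -> A i (Psi i w)].

(* Psi is, under each P x, a Markov chain with transition kernel K started at x
   (P_x = law of the chain started at Psi_0 = x). The Markov property is stated
   with respect to the natural filtration, generated by the cylinder events. *)
Definition markov_family (P : X -> probability Om R) (Psi : nat -> Om -> X)
    (K : R.-pker X ~> X) : Prop :=
  [/\ (forall n, measurable_fun setT (Psi n)),
      (forall x A, measurable A -> P x (Psi 0%N @^-1` A) = (\1_A x)%:E)
    & (forall x n (A : nat -> set X) B, (forall i, measurable (A i)) ->
         measurable B ->
         P x (cyl Psi n A `&` Psi n.+1 @^-1` B) =
         (\int[P x]_(w in cyl Psi n A) K (Psi n w) B)%E)].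

Fixpoint visit_time (G : set X) (Psi : nat -> Om -> X) (n : nat) (w : Om)
    : option nat :=
  match n with
  | O => Some 0%N
  | S m => match visit_time G Psi m w with
           | Some t => first_after (fun k => G (Psi k w)) t
           | None => None
           end
  end.

(* Psi_{T_n}, the G-induced chain (default value Psi_0 when T_n = oo,
   only ever used on {T_n < oo}). *)
Definition induced_chain (G : set X) (Psi : nat -> Om -> X) (n : nat) (w : Om) : X :=
  if visit_time G Psi n w is Some t then Psi t w else Psi 0%N w.

Definition hit_time (C : set X) (Psi : nat -> Om -> X) (w : Om) : option nat :=
  first_after (fun m => C (Psi m w)) 0%N.

Definition induced_hit_time (G C : set X) (Psi : nat -> Om -> X) (w : Om)
    : option nat :=
  first_after (fun m => exists t, visit_time G Psi m w = Some t /\ C (Psi t w)) 0%N.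

Definition gap_gt (G : set X) (Psi : nat -> Om -> X) (n k : nat) : set Om :=
  [set w | exists t, visit_time G Psi n w = Some t /\
           opt_gt (visit_time G Psi n.+1 w) (t + k)%N].

Definition induced_in (G : set X) (Psi : nat -> Om -> X) (n : nat) (A : set X)
    : set Om :=
  [set w | exists t, visit_time G Psi n w = Some t /\ A (Psi t w)].

End chain.

(* Given n, cut time into blocks: take k ~ n^gamma and m = n %/ k,
   so that m * k <= n.  If C has not been visited by time n, then either the
   induced chain has not entered C within m steps, or one of the first m
   excursions away from G lasts longer than k steps: otherwise T_m <= m k <= n
   and Psi_{T_j} would be in C for some 0 < j <= m.  By (ii) the first event
   has probability at most eta(x) exp(-omega m).  By (i) each excursion is
   longer than k with probability at most xi(x) k^-alpha for j = 0 (as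
   Psi_0 = x) and sup_G xi k^-alpha for j > 0 (as Psi_{T_j} is in G).  With
   gamma close to 1, both exp(-omega m) and m k^-alpha are O(n^-(alpha-eps)). *)

From HB Require Import structures.
From mathcomp Require Import all_boot all_order all_algebra.
From mathcomp Require Import all_classical all_reals all_analysis.
From mathcomp Require Import ring lra measurable_realfun.
Set Implicit Arguments. Unset Strict Implicit. Unset Printing Implicit Defensive.
Import Order.TTheory GRing.Theory Num.Theory.
Local Open Scope classical_set_scope.
Local Open Scope ring_scope.

Lemma first_afterP (P : nat -> Prop) t u :
  first_after P t = Some u <->
  [/\ (t < u)%N, P u & forall m, (t < m < u)%N -> ~ P m].
Proof.
rewrite /first_after; case: pselect => [h|h]; last first.
  split=> // -[tu Pu _]; case: h; exists u; rewrite tu; exact/asboolP.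
case: ex_minnP => m /andP[tm /asboolP Pm] m_min; split.
  case=> <-; split=> // m' /andP[tm' m'm] Pm'.
  have /m_min : (t < m')%N && `[< P m' >] by rewrite tm'; exact/asboolP.
  by rewrite leqNgt m'm.
case=> tu Pu u_min; congr Some; apply/eqP; rewrite eqn_leq.
rewrite m_min /=; last by rewrite tu; exact/asboolP.
rewrite leqNgt; apply/negP => mu; apply: (u_min m) => //.
by rewrite tm mu.
Qed.

Lemma first_after_None (P : nat -> Prop) t :
  first_after P t = None -> forall m, (t < m)%N -> ~ P m.
Proof.
rewrite /first_after; case: pselect => // h _ m tm Pm; apply: h.
by exists m; rewrite tm; exact/asboolP.
Qed.

Lemma opt_gt_first_after (P : nat -> Prop) t k :
  opt_gt (first_after P t) k <-> forall m, (t < m <= k)%N -> ~ P m.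
Proof.
case E: (first_after P t) => [u|] /=; last first.
  by split=> // _ m /andP[tm _]; exact: first_after_None E m tm.
move/first_afterP: E => [tu Pu u_min]; split.
  move=> ku m /andP[tm mk]; apply: u_min; rewrite tm.
  exact: leq_ltn_trans mk ku.
move=> H; rewrite ltnNge; apply/negP => uk; apply: (H u) => //.
by rewrite tu.
Qed.

Section measurability.
Context {d d' : measure_display} {X : measurableType d} {Om : measurableType d'}.
Variables (Psi : nat -> Om -> X) (G : set X).
Hypotheses (mPsi : forall n, measurable_fun setT (Psi n)) (mG : measurable G).

Lemma measurable_Psi_preimage n A : measurable A -> measurable (Psi n @^-1` A).
Proof. by move=> mA; rewrite -[_ @^-1` _]setTI; exact: mPsi. Qed.

Lemma measurable_prop_set (Q : Prop) : measurable [set _ : Om | Q].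
Proof.
case: (pselect Q) => q.
  by rewrite (_ : [set _ | Q] = setT) //; apply/seteqP; split.
by rewrite (_ : [set _ | Q] = set0) //; apply/seteqP; split.
Qed.

Lemma measurable_visit_time_eq j t :
  measurable [set w | visit_time G Psi j w = Some t].
Proof.
elim: j t => [|j IH] t; first exact: (measurable_prop_set (Some 0%N = Some t)).
rewrite (_ : [set w | _] = \bigcup_s ([set w | visit_time G Psi j w = Some s] `&`
  ([set _ | (s < t)%N] `&` (Psi t @^-1` G `&`
   \bigcap_m ([set _ | ~ (s < m < t)%N] `|` ~` (Psi m @^-1` G)))))).
  apply: bigcupT_measurable => s; apply: measurableI; first exact: IH.
  apply: measurableI; first exact: measurable_prop_set.
  apply: measurableI; first exact: measurable_Psi_preimage.
  apply: bigcapT_measurable => m; apply: measurableU.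
    exact: measurable_prop_set.
  exact/measurableC/measurable_Psi_preimage.
apply/seteqP; split => w /=.
  case E: (visit_time G Psi j w) => [s|] //= /first_afterP[st Gt t_min].
  exists s => //; split => //; split => //; split => // m _.
  by case: (pselect (s < m < t)%N) => h; [right; exact: t_min | left].
move=> [s _ [-> [st [Gt t_min]]]]; apply/first_afterP; split => //.
by move=> m hm Gm; case: (t_min m I).
Qed.

Lemma measurable_visit_time_None j :
  measurable [set w | visit_time G Psi j w = None].
Proof.
rewrite (_ : [set w | _] = ~` \bigcup_t [set w | visit_time G Psi j w = Some t]).
  exact/measurableC/bigcupT_measurable/measurable_visit_time_eq.
apply/seteqP; split => w /=; first by move=> E [t _]; rewrite /= E.
by case E: (visit_time G Psi j w) => [t|] // H; exfalso; apply: H; exists t.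
Qed.

Lemma measurable_induced_in j A : measurable A ->
  measurable (induced_in G Psi j A).
Proof.
move=> mA; rewrite (_ : induced_in _ _ _ _ =
  \bigcup_t ([set w | visit_time G Psi j w = Some t] `&` Psi t @^-1` A)).
  apply: bigcupT_measurable => t; apply: measurableI.
    exact: measurable_visit_time_eq.
  exact: measurable_Psi_preimage.
by apply/seteqP; split => w [t]; [move=> ?; exists t | move=> _ ?; exists t].
Qed.

Lemma measurable_gap_gt j k : measurable (gap_gt G Psi j k).
Proof.
rewrite (_ : gap_gt _ _ _ _ =
  \bigcup_t ([set w | visit_time G Psi j w = Some t] `&`
    ([set w | visit_time G Psi j.+1 w = None] `|`
     \bigcup_u ([set w | visit_time G Psi j.+1 w = Some u] `&`
                [set _ | (t + k < u)%N])))).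
  apply: bigcupT_measurable => t; apply: measurableI.
    exact: measurable_visit_time_eq.
  apply: measurableU; first exact: measurable_visit_time_None.
  apply: bigcupT_measurable => u; apply: measurableI.
    exact: measurable_visit_time_eq.
  exact: measurable_prop_set.
apply/seteqP; split => w.
  move=> [t [vt gt]]; exists t => //; split => //.
  by case E: (visit_time G Psi j.+1 w) gt => [u|] gt; [right; exists u | left].
move=> [t _ [vt [E|[u _ [E tku]]]]]; exists t; split => //; by rewrite E.
Qed.

Lemma measurable_induced_chain j : measurable_fun setT (induced_chain G Psi j).
Proof.
move=> _ A mA; rewrite setTI (_ : _ @^-1` _ =
  \bigcup_t ([set w | visit_time G Psi j w = Some t] `&` Psi t @^-1` A) `|`
  ([set w | visit_time G Psi j w = None] `&` Psi 0%N @^-1` A)).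
  apply: measurableU.
    apply: bigcupT_measurable => t; apply: measurableI.
      exact: measurable_visit_time_eq.
    exact: measurable_Psi_preimage.
  apply: measurableI; first exact: measurable_visit_time_None.
  exact: measurable_Psi_preimage.
apply/seteqP; split => w /=; rewrite /induced_chain.
  by case E: (visit_time G Psi j w) => [t|] h; [left; exists t | right].
by move=> [[t _ [-> At]]|[-> A0]].
Qed.

Lemma measurable_first_after_gt (A : nat -> set Om) n :
  (forall m, measurable (A m)) ->
  measurable [set w | opt_gt (first_after (A^~ w) 0) n].
Proof.
move=> mA; rewrite (_ : [set w | _] =
  \bigcap_m ([set _ | ~ (0 < m <= n)%N] `|` ~` A m)).
  apply: bigcapT_measurable => m; apply: measurableU.
    exact: measurable_prop_set.
  exact: measurableC.
apply/seteqP; split => w /=; rewrite opt_gt_first_after.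
  by move=> H m _; case: (pselect (0 < m <= n)%N) => h; [right; exact: H | left].
by move=> H m hm Am; case: (H m I).
Qed.

Lemma measurable_hit_time_gt C n : measurable C ->
  measurable [set w | opt_gt (hit_time C Psi w) n].
Proof.
move=> mC; apply: (measurable_first_after_gt (A := fun m => Psi m @^-1` C)).
by move=> m; exact: measurable_Psi_preimage.
Qed.

Lemma measurable_induced_hit_time_gt C n : measurable C ->
  measurable [set w | opt_gt (induced_hit_time G C Psi w) n].
Proof.
move=> mC; apply: (measurable_first_after_gt (A := induced_in G Psi ^~ C)).
by move=> m; exact: measurable_induced_in.
Qed.

End measurability.

Section excursions.
Context {d d' : measure_display} {X : measurableType d} {Om : measurableType d'}.
Variables (Psi : nat -> Om -> X) (G : set X).

Lemma visit_timeS_gt0_G j w t : visit_time G Psi j.+1 w = Some t ->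
  (0 < t)%N /\ G (Psi t w).
Proof.
rewrite /=; case: (visit_time G Psi j w) => [s|] // /first_afterP[st Gt _].
by split=> //; exact: leq_ltn_trans st.
Qed.

Lemma visit_time_le_mul k m w :
  (forall j, (j < m)%N -> ~ gap_gt G Psi j k w) ->
  forall j, (j <= m)%N -> exists2 t, visit_time G Psi j w = Some t & (t <= j * k)%N.
Proof.
move=> no_gap; elim=> [|j IH] jm; first by exists 0%N.
have [t vt tle] := IH (ltnW jm).
have {}no_gap := no_gap j jm.
case E: (visit_time G Psi j.+1 w) => [u|]; last first.
  by case: no_gap; exists t; rewrite E.
exists u => //; rewrite mulSn addnC.
have utk : (u <= t + k)%N.
  by rewrite leqNgt; apply/negP => tku; apply: no_gap; exists t; rewrite E.
by apply: leq_trans utk _; rewrite leq_add2r.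
Qed.

Lemma hit_time_gt_sub C n m k : (m * k <= n)%N ->
  [set w | opt_gt (hit_time C Psi w) n] `<=`
  [set w | opt_gt (induced_hit_time G C Psi w) m] `|`
  \big[setU/set0]_(j < m) gap_gt G Psi j k.
Proof.
move=> mkn w hit.
have [[j jm gap]|no_gap] := pselect (exists2 j, (j < m)%N & gap_gt G Psi j k w).
  by right; rewrite -(bigcup_mkord _ (gap_gt G Psi ^~ k)); exists j.
have {}no_gap j : (j < m)%N -> ~ gap_gt G Psi j k w.
  by move=> jm gap; apply: no_gap; exists j.
left; rewrite /= /induced_hit_time opt_gt_first_after.
move=> [//|j] /andP[_ jm] [t [vt Ct]].
have [t' vt' tle] := visit_time_le_mul no_gap jm.
move: vt'; rewrite vt => -[tt']; rewrite -tt' in tle.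
have [t_gt0 _] := visit_timeS_gt0_G vt.
move: hit; rewrite /= /hit_time opt_gt_first_after => /(_ t); apply => //.
by rewrite t_gt0 (leq_trans tle) // (leq_trans _ mkn) // leq_mul2r jm orbT.
Qed.

End excursions.

Lemma measure_bigsetU_le_const d (T : ringOfSetsType d) (R : realFieldType)
    (mu : {content set T -> \bar R}) (F : nat -> set T) (b : R) m :
  (forall j, measurable (F j)) -> (forall j, (mu (F j) <= b%:E)%E) ->
  (mu (\big[setU/set0]_(j < m) F j) <= (m%:R * b)%:E)%E.
Proof.
move=> mF Fb; rewrite (le_trans (Boole_inequality mu (fun j _ => mF j))) //.
rewrite (le_trans (lee_sum _ (fun (j : 'I_m) _ => Fb j))) //.
by rewrite sumEFin sumr_const card_ord mulr_natl.
Qed.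

Section tail_decomposition.
Context {d d' : measure_display} {X : measurableType d} {Om : measurableType d'}.
Context {R : realType}.
Variables (mu : {measure set Om -> \bar R}) (Psi : nat -> Om -> X) (G C : set X).
Hypotheses (mPsi : forall n, measurable_fun setT (Psi n)) (mG : measurable G).
Hypothesis mC : measurable C.

Lemma hit_time_gt_le n m k g : (m * k <= n)%N ->
  (forall j, (mu (gap_gt G Psi j k) <= g%:E)%E) ->
  (mu [set w | opt_gt (hit_time C Psi w) n] <=
   mu [set w | opt_gt (induced_hit_time G C Psi w) m] + (m%:R * g)%:E)%E.
Proof.
move=> mkn gap_le.
have mgaps : measurable (\big[setU/set0]_(j < m) gap_gt G Psi j k).
  by apply: bigsetU_measurable => j _; exact: measurable_gap_gt.
have mIh := measurable_induced_hit_time_gt mPsi mG m mC.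
apply: (@le_trans _ _ (mu ([set w | opt_gt (induced_hit_time G C Psi w) m] `|`
                           \big[setU/set0]_(j < m) gap_gt G Psi j k))).
  apply: le_measure; rewrite ?inE; last exact: hit_time_gt_sub.
    exact: measurable_hit_time_gt.
  exact: measurableU.
apply: le_trans (measureU2 _ mIh mgaps) _; rewrite leeD2l //.
exact: measure_bigsetU_le_const (measurable_gap_gt mPsi mG ^~ k) gap_le.
Qed.

End tail_decomposition.

Section excursion_tails.
Context {d d' : measure_display} {X : measurableType d} {Om : measurableType d'}.
Context {R : realType}.
Variables (mu : probability Om R) (Psi : nat -> Om -> X) (G : set X).
Variables (xi : X -> R) (alpha : R) (k : nat).
Hypotheses (mPsi : forall n, measurable_fun setT (Psi n)) (mG : measurable G).
Hypotheses (mxi : measurable_fun setT xi) (xi_ge0 : forall x, 0 <= xi x).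
Hypothesis gap_le : forall j A, measurable A ->
  (mu (gap_gt G Psi j k `&` induced_in G Psi j A) <=
   \int[mu]_(w in induced_in G Psi j A)
      (xi (induced_chain G Psi j w) * k%:R `^ (- alpha))%:E)%E.

Lemma gap_gt_induced_in_le j A M : measurable A -> 0 <= M ->
  (forall w, induced_in G Psi j A w -> xi (induced_chain G Psi j w) <= M) ->
  (mu (gap_gt G Psi j k `&` induced_in G Psi j A) <=
   (M * k%:R `^ (- alpha))%:E)%E.
Proof.
move=> mA M_ge0 xi_le; apply: le_trans (gap_le j mA) _.
have mI := measurable_induced_in mPsi mG j mA.
have Mk_ge0 : 0 <= M * k%:R `^ (- alpha) by rewrite mulr_ge0 ?powR_ge0.
apply: (@le_trans _ _ (\int[mu]_(w in induced_in G Psi j A)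
                          (cst (M * k%:R `^ (- alpha))%:E) w)%E).
  apply: ge0_le_integral => //.
  - by move=> w _; rewrite lee_fin mulr_ge0 ?powR_ge0.
  - apply/measurable_EFinP/measurable_funM/measurable_cst.
    exact/measurable_funTS/(measurableT_comp mxi (measurable_induced_chain mPsi mG j)).
  - by move=> w Iw; rewrite lee_fin ler_wpM2r ?powR_ge0 ?xi_le.
rewrite integral_cst // -[leRHS]mule1 lee_wpmul2l ?lee_fin //.
exact: probability_le1.
Qed.

Lemma gap_gt0_le x : (forall A, measurable A -> mu (Psi 0 @^-1` A) = (\1_A x)%:E) ->
  (mu (gap_gt G Psi 0 k) <= (xi x * k%:R `^ (- alpha))%:E)%E.
Proof.
(* Psi_0 = x almost surely, so {Psi_0 \in A} with A := {xi <= xi x} is a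
   full-measure event on which the induced chain at time 0 satisfies xi <= xi x. *)
move=> Psi0_law; pose A := xi @^-1` `]-oo, xi x].
have mA : measurable A by rewrite -[A]setTI; exact: mxi.
have IE : induced_in G Psi 0 A = Psi 0 @^-1` A.
  apply/seteqP; split => w; first by move=> [t [[<-]]].
  by move=> Aw; exists 0%N.
have mI : measurable (induced_in G Psi 0 A) by rewrite IE; exact: measurable_Psi_preimage.
have I_full : mu (~` induced_in G Psi 0 A) = 0%E.
  rewrite probability_setC // IE Psi0_law // indicE mem_set ?subee //.
  by rewrite /A /= in_itv /=.
rewrite (measureDI _ (measurable_gap_gt mPsi mG 0 k) mI).
rewrite (subset_measure0 _ _ _ I_full) ?add0e; last 3 first.
- exact: measurableD (measurable_gap_gt mPsi mG 0 k) mI.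
- exact: measurableC.
- by move=> w [].
apply: gap_gt_induced_in_le => // w [t [[<-]]].
by rewrite /A /= in_itv.
Qed.

Lemma gap_gtS_le xi1 j : 0 <= xi1 -> (forall y, G y -> xi y <= xi1) ->
  (mu (gap_gt G Psi j.+1 k) <= (xi1 * k%:R `^ (- alpha))%:E)%E.
Proof.
move=> xi1_ge0 xi1_ub.
have -> : gap_gt G Psi j.+1 k = gap_gt G Psi j.+1 k `&` induced_in G Psi j.+1 setT.
  by apply/seteqP; split => [w [t [vt gap]] | w []] //; split; exists t.
apply: gap_gt_induced_in_le => // w [t [vt _]]; rewrite /induced_chain vt.
by apply: xi1_ub; have [] := visit_timeS_gt0_G vt.
Qed.

Lemma gap_gt_le x b j :
  (forall A, measurable A -> mu (Psi 0 @^-1` A) = (\1_A x)%:E) ->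
  1 <= b -> (forall y, G y -> xi y <= b) -> 1 <= xi x ->
  (mu (gap_gt G Psi j k) <= (b * xi x * k%:R `^ (- alpha))%:E)%E.
Proof.
move=> Psi0_law b_ge1 xi_le_b xi_ge1.
have b_ge0 : 0 <= b := le_trans ler01 b_ge1.
case: j => [|j].
  apply: le_trans (gap_gt0_le Psi0_law) _.
  by rewrite lee_fin ler_wpM2r ?powR_ge0 // ler_peMl // (le_trans ler01 xi_ge1).
apply: le_trans (gap_gtS_le j b_ge0 xi_le_b) _.
by rewrite lee_fin ler_wpM2r ?powR_ge0 // ler_peMr.
Qed.

End excursion_tails.

Section block_estimates.
Variable R : realType.

Lemma expRN_mul_powR_le (y r : R) : 0 < y -> 0 < r -> expR (- y) * y `^ r <= r `^ r.
Proof.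
move=> y_gt0 r_gt0; pose z := y / r.
have z_gt0 : 0 < z by exact: divr_gt0.
have yE : y = r * z by rewrite /z mulrC divfK ?gt_eqF.
have z_le : z `^ r <= expR y.
  rewrite [in expR y]yE mulrC expRM ge0_ler_powR ?nnegrE ?expR_ge0 ?ltW //.
  by have := expR_ge1Dx z; lra.
rewrite [in _ `^ r]yE powRM ?(ltW r_gt0) ?(ltW z_gt0) // mulrCA.
rewrite -[leRHS]mulr1 ler_pM2l ?powR_gt0 // expRN.
by rewrite mulrC -ler_pdivlMr ?invr_gt0 ?expR_gt0 // div1r invrK.
Qed.

Lemma expRN_le_powRN (omega r delta N : R) (m : nat) :
  0 < omega -> 0 < r -> 0 < N -> N `^ delta <= m.+1%:R ->
  expR (- omega * m%:R) <= expR omega * r `^ r / omega `^ r * N `^ (- (delta * r)).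
Proof.
move=> omega_gt0 r_gt0 N_gt0 Nd_le; pose y := omega * m.+1%:R.
have y_gt0 : 0 < y by rewrite mulr_gt0 ?ltr0n.
have expE : expR (- omega * m%:R) = expR omega * expR (- y).
  by rewrite -expRD /y -addn1 natrD; congr expR; ring.
have Nr_le : omega `^ r * N `^ (delta * r) <= y `^ r.
  rewrite powRrM -powRM ?powR_ge0 ?(ltW omega_gt0) //.
  apply: ge0_ler_powR; rewrite ?nnegrE ?(ltW r_gt0) ?(ltW y_gt0) //.
    by rewrite mulr_ge0 ?powR_ge0 ?(ltW omega_gt0).
  by rewrite ler_pM2l.
rewrite expE powRN -!mulrA ler_pM2l ?expR_gt0 // -invfM.
rewrite ler_pdivlMr ?mulr_gt0 ?powR_gt0 //.
apply: le_trans (expRN_mul_powR_le y_gt0 r_gt0).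
by rewrite ler_pM2l ?expR_gt0.
Qed.

Lemma block_count_le_powRN (alpha beta gamma N : R) (m k : nat) :
  0 < alpha -> 0 < N -> (0 < k)%N -> gamma * (1 + alpha) = 1 + beta ->
  m%:R * k%:R <= N -> N `^ gamma <= 2 * k%:R ->
  m%:R * k%:R `^ (- alpha) <= 2 `^ (1 + alpha) * N `^ (- beta).
Proof.
move=> alpha_gt0 N_gt0 k_gt0 gammaE mk_le Ng_le.
have kR_gt0 : 0 < k%:R :> R by rewrite ltr0n.
have kE : k%:R `^ (1 + alpha) = k%:R * k%:R `^ alpha.
  by rewrite powRD ?powRr1 ?(gt_eqF kR_gt0) ?implybT // ltW.
have NE : N `^ (1 + beta) = N * N `^ beta.
  by rewrite powRD ?powRr1 ?(gt_eqF N_gt0) ?implybT // ltW.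
have N_le : N `^ (1 + beta) <= 2 `^ (1 + alpha) * k%:R `^ (1 + alpha).
  rewrite -powRM ?ler0n // -gammaE powRrM ge0_ler_powR ?nnegrE ?powR_ge0 //.
  by lra.
have -> : m%:R * k%:R `^ (- alpha) = m%:R * k%:R / k%:R `^ (1 + alpha).
  by rewrite kE powRN invfM mulrA mulfK ?gt_eqF.
rewrite ler_pdivrMr ?powR_gt0 //; apply: le_trans mk_le _.
by rewrite powRN mulrAC ler_pdivlMr ?powR_gt0 // -NE.
Qed.

Lemma block_decomposition (alpha omega beta : R) :
  0 < alpha -> 0 < omega -> beta < alpha ->
  exists2 c : R, 0 <= c & forall n : nat, (1 <= n)%N -> exists m k : nat,
    [/\ (0 < k)%N, (m * k <= n)%N,
        expR (- omega * m%:R) <= c * n%:R `^ (- beta)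
      & m%:R * k%:R `^ (- alpha) <= c * n%:R `^ (- beta)].
Proof.
move=> alpha_gt0 omega_gt0.
wlog beta_gt0 : beta / 0 < beta => [wlog_beta beta_lt|beta_lt].
  have [beta_gt0|beta_le0] := ltP 0 beta; first exact: wlog_beta.
  have half_gt0 : 0 < alpha / 2 by exact: divr_gt0.
  have half_lt : alpha / 2 < alpha by rewrite ltr_pdivrMr //; lra.
  have [c c_ge0 blocks] := wlog_beta (alpha / 2) half_gt0 half_lt.
  exists c => // n n_ge1; have [m [k [k_gt0 mkn exp_le count_le]]] := blocks n n_ge1.
  have pow_le : c * n%:R `^ (- (alpha / 2)) <= c * n%:R `^ (- beta).
    by rewrite ler_wpM2l // ler_powR ?ler1n //; lra.
  by exists m, k; split; rewrite // (le_trans _ pow_le).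
(* Blocks of length k ~ n^gamma, m ~ n^delta of them: gamma is chosen so that
   m k^-alpha ~ n^(1 - gamma (1 + alpha)) = n^-beta, and exp(-omega n^delta)
   is O(n^-beta) since exponential decay beats the power n^-(delta r). *)
pose delta := (alpha - beta) / (1 + alpha); pose gamma := 1 - delta.
pose r := beta / delta.
have delta_gt0 : 0 < delta by apply: divr_gt0; lra.
have gamma_gt0 : 0 < gamma by rewrite subr_gt0 ltr_pdivrMr; lra.
have r_gt0 : 0 < r by exact: divr_gt0.
have gammaE : gamma * (1 + alpha) = 1 + beta by rewrite /gamma /delta; field; lra.
pose c1 := expR omega * r `^ r / omega `^ r; pose c2 := 2 `^ (1 + alpha) : R.
have c1_ge0 : 0 <= c1 by rewrite !mulr_ge0 ?invr_ge0 ?expR_ge0 ?powR_ge0.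
exists (c1 + c2); first by rewrite addr_ge0 ?powR_ge0.
move=> n n_ge1; pose N : R := n%:R; pose k := Num.trunc (N `^ gamma).
have N_gt0 : 0 < N by rewrite ltr0n.
have Ng_ge1 : 1 <= N `^ gamma.
  by rewrite -(powRr0 N) ler_powR ?ler1n // ltW.
have k_gt0 : (0 < k)%N by rewrite truncn_gt0.
have Ng_le : N `^ gamma <= 2 * k%:R.
  have k_ge1 : 1 <= k%:R :> R by rewrite ler1n.
  by have := truncnS_gt (N `^ gamma); rewrite -/k -addn1 natrD; lra.
have Nd_le : N `^ delta <= (n %/ k).+1%:R.
  have n_lt : N < (n %/ k).+1%:R * k%:R by rewrite -natrM ltr_nat ltn_ceil.
  have NE : N = N `^ delta * N `^ gamma.
    by rewrite -powRD ?(gt_eqF N_gt0) ?implybT // addrC subrK powRr1 // ltW.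
  rewrite -(ler_pM2r (lt_le_trans ltr01 Ng_ge1)) -NE; apply/ltW/(lt_le_trans n_lt).
  by rewrite ler_wpM2l // truncn_le; lra.
exists (n %/ k)%N, k; split => //; first exact: leq_trunc_div.
  apply: le_trans (expRN_le_powRN omega_gt0 r_gt0 N_gt0 Nd_le) _.
  have -> : delta * r = beta by rewrite /r mulrC divfK ?gt_eqF.
  by rewrite ler_wpM2r ?powR_ge0 // lerDl powR_ge0.
have mk_le : (n %/ k)%:R * k%:R <= N by rewrite -natrM ler_nat leq_trunc_div.
apply: le_trans (block_count_le_powRN alpha_gt0 N_gt0 k_gt0 gammaE mk_le Ng_le) _.
by rewrite ler_wpM2r ?powR_ge0 // lerDr.
Qed.

End block_estimates.

Theorem theorem3p6 (d d' : measure_display) (X : measurableType d)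
  (Om : measurableType d') (R : realType)
  (P : X -> probability Om R) (Psi : nat -> Om -> X) (K : R.-pker X ~> X)
  (G B C : set X) (alpha omega : R) (xi eta : X -> R) :
  markov_family P Psi K ->
  measurable G -> measurable B -> G `&` B = set0 -> G `|` B = setT ->
  measurable C -> C `<=` G ->
  (* (i) *)
  0 < alpha ->
  measurable_fun setT xi ->
  (forall x, 1 <= xi x) ->
  (exists xi1 : R, forall x, G x -> xi x <= xi1) ->
  (forall x n k A, (0 < k)%N -> measurable A ->
     (P x (gap_gt G Psi n k `&` induced_in G Psi n A) <=
      \int[P x]_(w in induced_in G Psi n A)
         (xi (induced_chain G Psi n w) * k%:R `^ (- alpha))%:E)%E) ->
  (* (ii) *)
  0 < omega ->
  (forall x, 0 < eta x) ->
  (forall x k, (P x [set w | opt_gt (induced_hit_time G C Psi w) k] <=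
                (eta x * expR (- omega * k%:R))%:E)%E) ->
  forall eps : R, 0 < eps ->
  exists c : R, forall x (n : nat), (1 <= n)%N ->
    (P x [set w | opt_gt (hit_time C Psi w) n] <=
     (c * (eta x + xi x) * n%:R `^ (- (alpha - eps)))%:E)%E.
Proof.
move=> [mPsi Psi0_law _] mG _ _ _ mC _ alpha_gt0 mxi xi_ge1 [xi1 xi1_ub] gap_le
  omega_gt0 eta_gt0 ihit_le eps eps_gt0.
have beta_lt : alpha - eps < alpha by lra.
have [c c_ge0 blocks] := block_decomposition alpha_gt0 omega_gt0 beta_lt.
pose b := Num.max 1 xi1.
have b_ge1 : 1 <= b by rewrite le_max lexx.
have b_ge0 : 0 <= b := le_trans ler01 b_ge1.
have xi_le_b y : G y -> xi y <= b by move=> Gy; rewrite le_max xi1_ub ?orbT.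
have xi_ge0 y : 0 <= xi y by have := xi_ge1 y; lra.
exists (c * (1 + b)) => x n n_ge1.
have [m [k [k_gt0 mkn exp_le count_le]]] := blocks n n_ge1.
have gap_le_k j A : measurable A -> _ := gap_le x j k A k_gt0.
have gap_tail j := gap_gt_le mPsi mG mxi xi_ge0 gap_le_k j (Psi0_law x) b_ge1
  xi_le_b (xi_ge1 x).
apply: le_trans (hit_time_gt_le mPsi mG mC mkn gap_tail) _.
apply: le_trans (leeD2r _ (ihit_le x m)) _; rewrite -EFinD lee_fin.
set N := n%:R `^ _ in exp_le count_le *.
have eta_exp : eta x * expR (- omega * m%:R) <= eta x * (c * N) by rewrite ler_pM2l.
have gaps : m%:R * (b * xi x * k%:R `^ (- alpha)) <= b * xi x * (c * N).
  by rewrite mulrCA ler_wpM2l ?mulr_ge0.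
have : 0 <= c * N * (xi x + b * eta x).
  by rewrite mulr_ge0 ?addr_ge0 ?mulr_ge0 ?powR_ge0 // ltW.
lra.
Qed.
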